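(* Let $R$ be an associative unital division ring over a field $F$ of characteristic $0$ and let $p,q\in F$. Suppose $u_{m,n}\in R$ and invertible $v_{m,n}\in R$ ($(m,n)\in\mathbb{Z}^2$) satisfy for all $(m,n)$ $$p\,v_{m,n+1}=u_{m,n+1}-u_{m+1,n},\qquad q\,v_{m,n}^{-1}=u_{m,n-1}-u_{m+1,n}.$$ Then for all $(m,n)$: $$(u_{m,n+1}-u_{m+1,n})(u_{m,n}-u_{m+1,n+1})=pq,\qquad (u_{m,n}-u_{m+1,n+1})(u_{m,n+1}-u_{m+1,n})=pq,$$ and $$p\,(v_{m,n}-v_{m+1,n+1})=q\,(v_{m,n+1}^{-1}-v_{m+1,n}^{-1}).$$ *)

From HB Require Import structures.
From mathcomp Require Import all_boot all_order all_algebra.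
Set Implicit Arguments. Unset Strict Implicit. Unset Printing Implicit Defensive.
Import Order.TTheory GRing.Theory Num.Theory.
Local Open Scope ring_scope.

(* A (possibly noncommutative) unit ring R is a division ring when every
   nonzero element is invertible (and 1 != 0, which unitRingType already has). *)
Definition is_division_ring (R : unitRingType) : Prop :=
  forall x : R, x != 0 -> x \is a GRing.unit.

From HB Require Import structures.
From mathcomp Require Import all_boot all_order all_algebra.
Import Order.TTheory GRing.Theory Num.Theory.
Local Open Scope ring_scope.

(* The two lattice equations, at (m, n) and shifted to (m, n + 1), write the
   differences u_{m,n+1} - u_{m+1,n} and u_{m,n} - u_{m+1,n+1} as p v_{m,n+1}
   and q v_{m,n+1}^-1, so their products in either order are p q.  Expanding
   both sides of the equation for v in the same way gives the same four
   u-values, paired differently. *)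

Lemma subrACA (V : zmodType) (a b c d : V) : a - b - (c - d) = a - c - (b - d).
Proof. by rewrite !opprB addrACA [RHS]addrACA [- b + - c]addrC. Qed.

Section ScaledInverses.

Variables (F : fieldType) (A : unitAlgType F) (a b : F) (x : A).
Hypothesis xU : x \is a GRing.unit.

Lemma scale_mulrV : a *: x * (b *: x^-1) = (a * b)%:A.
Proof. by rewrite -scalerAl -scalerAr scalerA mulrV. Qed.

Lemma scale_mulVr : b *: x^-1 * (a *: x) = (a * b)%:A.
Proof. by rewrite -scalerAl -scalerAr scalerA mulVr // mulrC. Qed.

End ScaledInverses.

Section LatticeSystem.

Variables (F : fieldType) (R : unitAlgType F) (p q : F) (u v : int -> int -> R).
Hypothesis vU : forall m n : int, v m n \is a GRing.unit.
Hypothesis pvE : forall m n : int, p *: v m (n + 1) = u m (n + 1) - u (m + 1) n.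
Hypothesis qvVE : forall m n : int, q *: (v m n)^-1 = u m (n - 1) - u (m + 1) n.

Lemma pvE_shift m n : p *: v m n = u m n - u (m + 1) (n - 1).
Proof. by rewrite -[in LHS](subrK 1 n) pvE subrK. Qed.

Lemma qvVE_shift m n : q *: (v m (n + 1))^-1 = u m n - u (m + 1) (n + 1).
Proof. by rewrite qvVE addrK. Qed.

Lemma lattice_diff_mul m n :
  (u m (n + 1) - u (m + 1) n) * (u m n - u (m + 1) (n + 1)) = (p * q)%:A.
Proof. by rewrite -pvE -qvVE_shift scale_mulrV. Qed.

Lemma lattice_diff_mulC m n :
  (u m n - u (m + 1) (n + 1)) * (u m (n + 1) - u (m + 1) n) = (p * q)%:A.
Proof. by rewrite -pvE -qvVE_shift scale_mulVr. Qed.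

Lemma lattice_v_equation m n :
  p *: (v m n - v (m + 1) (n + 1)) = q *: ((v m (n + 1))^-1 - (v (m + 1) n)^-1).
Proof. by rewrite !scalerBr pvE_shift pvE qvVE_shift qvVE subrACA. Qed.

End LatticeSystem.

Theorem theorem5p4 (F : fieldType) (R : unitAlgType F)
  (hchar : [pchar F] =i pred0) (hdiv : is_division_ring R)
  (p q : F) (u v : int -> int -> R)
  (hvunit : forall m n : int, v m n \is a GRing.unit)
  (h1 : forall m n : int, p *: v m (n + 1) = u m (n + 1) - u (m + 1) n)
  (h2 : forall m n : int, q *: (v m n)^-1 = u m (n - 1) - u (m + 1) n) :
  forall m n : int,
    [/\ (u m (n + 1) - u (m + 1) n) * (u m n - u (m + 1) (n + 1)) = (p * q)%:A,
        (u m n - u (m + 1) (n + 1)) * (u m (n + 1) - u (m + 1) n) = (p * q)%:A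
      & p *: (v m n - v (m + 1) (n + 1))
          = q *: ((v m (n + 1))^-1 - (v (m + 1) n)^-1)].
Proof.
move=> m n; split.
- exact: lattice_diff_mul.
- exact: lattice_diff_mulC.
- exact: lattice_v_equation.
Qed.
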